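(* Let $F$ be a field, let $L_1,\dots,L_m$ be finite separable field extensions of $F$, and let $r_1,\dots,r_m$ be positive integers. Let $L=\prod_{i=1}^m L_i$ and $L'=\prod_{i=1}^m\big(\prod^{r_i}L_i\big)$ (the étale algebra in which $L_i$ appears $r_i$ times). Then $T_{L/F}(F)/R\simeq T_{L'/F}(F)/R$.
   Context: For an étale algebra $E=\prod_j E_j$ over $F$ (a product of finite separable field extensions), the multinorm torus $T_{E/F}$ is the kernel of $\prod_j R_{E_j/F}\mathbb{G}_m\to\mathbb{G}_m$, $(x_j)\mapsto\prod_j N_{E_j/F}(x_j)$. For a torus $T$ over $F$, $T(F)/R$ is the quotient of $T(F)$ by the subgroup of elements $R$-equivalent to the identity, $R$-equivalence being generated by: $x_0\sim x_1$ if some $F$-rational map $f:\mathbb{P}^1\dashrightarrow T$ satisfies $f(0)=x_0$, $f(1)=x_1$. *)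

From HB Require Import structures.
From mathcomp Require Import all_boot all_order all_algebra all_field.
From Stdlib Require Import Relations.
Set Implicit Arguments. Unset Strict Implicit. Unset Printing Implicit Defensive.
Import GRing.Theory.
Local Open Scope ring_scope.

Section Multinorm.
Variable F : fieldType.

Definition fbasis (E : fieldExtType F) := vbasis (fullv : {vspace E}).

(* N_{E/F}(a) : determinant of the F-linear map "multiplication by a" *)
Definition normE (E : fieldExtType F) (a : E) : F :=
  \det (\matrix_(i, j) coord (fbasis E) j (tnth (fbasis E) i * a)).

(* N_{E(t)/F(t)}(p) for p in E[t]: determinant (over F[t]) of the F[t]-linear
   map "multiplication by p" on E[t] = (F[t])^n, in the basis fbasis E. *)
Definition normP (E : fieldExtType F) (p : {poly E}) : {poly F} :=
  \det (\matrix_(i, j)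
          \poly_(k < size p) coord (fbasis E) j (tnth (fbasis E) i * p`_k)).

Variable I : finType.
Variable E : I -> fieldExtType F.

(* F-points of the multinorm torus T_{E/F}, E = prod_i E i *)
Definition inT (x : forall i, E i) : Prop :=
  (forall i, x i != 0) /\ \prod_(i : I) normE (x i) = 1.

Definition mulT (x y : forall i, E i) : forall i, E i := fun i => x i * y i.

(* Elementary R-link: x = f(0), y = f(1) for an F-rational map
   f : P^1 -/-> T_{E/F} defined at 0 and 1.  Such an f is given by
   f_i = p_i / q_i with p_i in E_i[t], q_i in F[t], q_i(0), q_i(1) != 0,
   p_i(0), p_i(1) != 0 (values in the units), and prod_i N(f_i) = 1 in F(t),
   i.e. prod_i N(p_i) = prod_i q_i^[E_i:F] in F[t]. *)
Definition Rlink (x y : forall i, E i) : Prop :=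
  inT x /\ inT y /\
  exists (p : forall i, {poly E i}) (q : I -> {poly F}),
    [/\ forall i, (q i).[0] != 0 /\ (q i).[1] != 0,
        forall i, (p i).[0] != 0 /\ (p i).[1] != 0,
        \prod_(i : I) normP (p i) = \prod_(i : I) (q i) ^+ \dim (fullv : {vspace E i}),
        forall i, x i = (p i).[0] / ((q i).[0])%:A
      & forall i, y i = (p i).[1] / ((q i).[1])%:A].

Definition Requiv : relation (forall i, E i) := clos_refl_sym_trans _ Rlink.

End Multinorm.

(* T_{E/F}(F)/R and T_{E'/F}(F)/R are isomorphic groups, written out on
   representatives: a map f : T_E(F) -> T_E'(F) inducing a well-defined,
   injective, surjective, multiplicative map of the quotients by R. *)
Definition RquotIso (F : fieldType) (I J : finType)
    (E : I -> fieldExtType F) (E' : J -> fieldExtType F) : Prop :=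
  exists f : (forall i, E i) -> (forall j, E' j),
    [/\ forall x, inT x -> inT (f x),
        forall x y, inT x -> inT y -> (Requiv x y <-> Requiv (f x) (f y)),
        forall x y, inT x -> inT y -> Requiv (f (mulT x y)) (mulT (f x) (f y))
      & forall y, inT y -> exists x, inT x /\ Requiv (f x) y].

From mathcomp Require Import all_boot all_order all_algebra all_field.
From Stdlib Require Import FunctionalExtensionality Relations.
Set Implicit Arguments. Unset Strict Implicit. Unset Printing Implicit Defensive.
Import GRing.Theory.
Local Open Scope ring_scope.

(* Putting x_i in copy 0 of L_i and 1 in the other copies embeds T_{L/F} in
   T_{L'/F}, and multiplying the copies of each L_i is a retraction of this
   embedding.  Both maps send elementary R-links to R-links, so the embedding
   induces an injective homomorphism on R-classes.  It is also surjective: a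
   point y of T_{L'/F} is R-equivalent to a point supported on copy 0, i.e.
   to a point of the image.  Indeed, the entries y_k are joined to 1 by the
   lines c_k(t) = 1 + t (y_k - 1), and multiplying copy 0 by
   (prod_k c_k^(d-1)) / (prod_k N(c_k)), d = [L_i : F], keeps the norm equal
   to 1 (as N(c^(d-1)) = N(c)^d / N(c)) with a denominator in F[t]. *)

Section Norms.
Variables (F : fieldType) (E : fieldExtType F).
Local Notation d := (\dim (fullv : {vspace E})).
Local Notation b := (fbasis E).

Definition lmul_mx (a : E) : 'M[F]_d := \matrix_(i, j) coord b j (tnth b i * a).

Definition lmul_polymx (p : {poly E}) : 'M[{poly F}]_d :=
  \matrix_(i, j) \poly_(k < size p) coord b j (tnth b i * p`_k).

Lemma dimE_gt0 : (0 < d)%N. Proof. exact: (adim_gt0 {:E}%AS). Qed.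

Lemma coord_fbasis_expand (v : E) : v = \sum_(l < d) coord b l v *: tnth b l.
Proof.
rewrite {1}(coord_vbasis (memvf v)); apply: eq_bigr => l _.
by rewrite (tnth_nth 0).
Qed.

Lemma lmul_mxM (a c : E) : lmul_mx (a * c) = lmul_mx a *m lmul_mx c.
Proof.
apply/matrixP => i j; rewrite !mxE mulrA [tnth b i * a]coord_fbasis_expand.
rewrite mulr_suml linear_sum; apply: eq_bigr => l _.
by rewrite !mxE -scalerAl linearZ.
Qed.

Lemma lmul_mx1 : lmul_mx 1 = 1%:M.
Proof.
apply/matrixP => i j; rewrite !mxE mulr1 (tnth_nth 0) coord_free //.
exact: (basis_free (vbasisP _)).
Qed.

Lemma lmul_mxZ (x : F) (a : E) : lmul_mx (x *: a) = x *: lmul_mx a.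
Proof. by apply/matrixP => i j; rewrite !mxE -scalerAr linearZ. Qed.

Lemma lmul_mx_sum (k : nat) (f : 'I_k -> E) :
  lmul_mx (\sum_(l < k) f l) = \sum_(l < k) lmul_mx (f l).
Proof.
elim/big_rec2: _ => [|l x y _ <-].
  by apply/matrixP => i j; rewrite !mxE mulr0 linear0.
by apply/matrixP => i j; rewrite !mxE mulrDr linearD.
Qed.

Lemma coef_lmul_polymx (p : {poly E}) i j k :
  (lmul_polymx p i j)`_k = lmul_mx p`_k i j.
Proof.
rewrite !mxE coef_poly; case: ltnP => // le_p_k.
by rewrite nth_default // mulr0 linear0.
Qed.

Lemma lmul_polymxM (p q : {poly E}) :
  lmul_polymx (p * q) = lmul_polymx p *m lmul_polymx q.
Proof.
apply/matrixP => i j; apply/polyP => k.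
rewrite coef_lmul_polymx coefM lmul_mx_sum summxE [in RHS]mxE coef_sum.
under [RHS]eq_bigr do rewrite coefM.
rewrite exchange_big /=; apply: eq_bigr => l _.
rewrite lmul_mxM mxE; apply: eq_bigr => s _.
by rewrite !coef_lmul_polymx.
Qed.

Lemma lmul_polymxC (a : E) : lmul_polymx a%:P = map_mx polyC (lmul_mx a).
Proof.
apply/matrixP => i j; apply/polyP => k.
rewrite coef_lmul_polymx !mxE !coefC; case: (k == 0)%N => //.
by rewrite mulr0 linear0.
Qed.

Lemma normE_det (a : E) : normE a = \det (lmul_mx a). Proof. by []. Qed.

Lemma normP_det (p : {poly E}) : normP p = \det (lmul_polymx p). Proof. by []. Qed.

Lemma normE_mul (a c : E) : normE (a * c) = normE a * normE c.
Proof. by rewrite !normE_det lmul_mxM det_mulmx. Qed.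

Lemma normE1 : normE (1 : E) = 1.
Proof. by rewrite normE_det lmul_mx1 det1. Qed.

Lemma normE_prod (K : Type) (s : seq K) (P : pred K) (f : K -> E) :
  normE (\prod_(k <- s | P k) f k) = \prod_(k <- s | P k) normE (f k).
Proof. exact: (big_morph _ normE_mul normE1). Qed.

Lemma normE_alg (x : F) : normE (x%:A : E) = x ^+ d.
Proof. by rewrite normE_det lmul_mxZ lmul_mx1 scalemx1 det_scalar. Qed.

Lemma normE_neq0 (a : E) : a != 0 -> normE a != 0.
Proof.
move=> a_neq0; apply: contra_neq (oner_neq0 F) => Na0.
by rewrite -normE1 -(mulfV a_neq0) normE_mul Na0 mul0r.
Qed.

Lemma normE_inv (a : E) : a != 0 -> normE a^-1 = (normE a)^-1.
Proof.
move=> a_neq0; apply: (mulfI (normE_neq0 a_neq0)).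
by rewrite -normE_mul !mulfV ?normE1 ?normE_neq0.
Qed.

Lemma normP_mul (p q : {poly E}) : normP (p * q) = normP p * normP q.
Proof. by rewrite !normP_det lmul_polymxM det_mulmx. Qed.

Lemma normP_C (a : E) : normP a%:P = (normE a)%:P.
Proof. by rewrite normP_det lmul_polymxC det_map_mx. Qed.

Lemma normP1 : normP (1 : {poly E}) = 1.
Proof. by rewrite -polyC1 normP_C normE1. Qed.

Lemma normP_prod (K : Type) (s : seq K) (P : pred K) (f : K -> {poly E}) :
  normP (\prod_(k <- s | P k) f k) = \prod_(k <- s | P k) normP (f k).
Proof. exact: (big_morph _ normP_mul normP1). Qed.

Lemma normP_exp (p : {poly E}) k : normP (p ^+ k) = normP p ^+ k.
Proof. by elim: k => [|k IHk]; rewrite ?normP1 // !exprS normP_mul IHk. Qed.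

Lemma horner_normP (p : {poly E}) (x : F) : (normP p).[x] = normE p.[x%:A].
Proof.
rewrite normP_det normE_det -[_.[x]]/(horner_eval x _) -det_map_mx.
congr (\det _); apply/matrixP => i j; rewrite !mxE.
rewrite [LHS]/(horner_eval _ _) /horner_eval horner_poly horner_coef.
rewrite mulr_sumr linear_sum; apply: eq_bigr => k _ /=.
by rewrite exprZn expr1n -scalerAr mulr1 -scalerAr linearZ /= mulrC.
Qed.

Definition line (a : E) : {poly E} := 1 + 'X * (a - 1)%:P.

Lemma line0 (a : E) : (line a).[0] = 1.
Proof. by rewrite !hornerE. Qed.

Lemma line1 (a : E) : (line a).[1] = a.
Proof. by rewrite hornerD hornerM hornerX !hornerC mul1r addrC subrK. Qed.

End Norms.

Lemma homo_Requiv (F : fieldType) (I I' : finType)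
    (E : I -> fieldExtType F) (E' : I' -> fieldExtType F)
    (h : (forall i, E i) -> (forall i, E' i)) :
  {homo h : x y / Rlink x y >-> Rlink x y} ->
  {homo h : x y / Requiv x y >-> Requiv x y}.
Proof.
move=> h_link x y; elim=> [u v /h_link|u|u v _|u v w _ IHuv _ IHvw].
- exact: rst_step.
- exact: rst_refl.
- exact: rst_sym.
- exact: rst_trans IHvw.
Qed.

Section Torus.
Variables (F : fieldType) (I : finType) (E : I -> fieldExtType F).
Local Notation T := (forall i, E i).

Definition oneT : T := fun i => 1.
Definition invT (x : T) : T := fun i => (x i)^-1.

Lemma mul1T (x : T) : mulT oneT x = x.
Proof. by apply: functional_extensionality_dep => i; rewrite /mulT mul1r. Qed.

Lemma mulKT (x y : T) : inT x -> mulT x (mulT (invT x) y) = y.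
Proof.
move=> [x_neq0 _]; apply: functional_extensionality_dep => i.
by rewrite /mulT /invT mulVKf ?x_neq0.
Qed.

Lemma inT_mul (x y : T) : inT x -> inT y -> inT (mulT x y).
Proof.
move=> [x_neq0 Nx] [y_neq0 Ny]; split=> [i|].
  by rewrite /mulT mulf_neq0 ?x_neq0 ?y_neq0.
by rewrite /mulT; under eq_bigr do rewrite normE_mul; rewrite big_split /= Nx Ny mulr1.
Qed.

Lemma inT_inv (x : T) : inT x -> inT (invT x).
Proof.
move=> [x_neq0 Nx]; split=> [i|]; first by rewrite /invT invr_eq0 x_neq0.
by rewrite /invT; under eq_bigr do rewrite normE_inv //; rewrite prodfV Nx invr1.
Qed.

Lemma inT_horner (p : forall i, {poly E i}) (q : I -> {poly F}) (c : F) :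
  (forall i, (q i).[c] != 0) -> (forall i, (p i).[c%:A] != 0) ->
  \prod_i normP (p i) = \prod_i q i ^+ \dim (fullv : {vspace E i}) ->
  inT (fun i => (p i).[c%:A] / ((q i).[c])%:A).
Proof.
move=> qc_neq0 pc_neq0 Np; have qcA_neq0 i : ((q i).[c])%:A != 0 :> E i.
  by rewrite scaler_eq0 negb_or qc_neq0 oner_eq0.
split=> [i|]; first by rewrite mulf_neq0 ?invr_eq0 ?pc_neq0 ?qcA_neq0.
under eq_bigr do rewrite normE_mul normE_inv // normE_alg.
rewrite big_split /= prodfV.
have := congr1 (horner^~ c) Np; rewrite /= !horner_prod.
under eq_bigr do rewrite horner_normP.
under [X in _ = X -> _]eq_bigr do rewrite horner_exp.
move=> ->; rewrite divff // prodf_seq_neq0; apply/allP => i _ /=.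
by rewrite expf_neq0.
Qed.

Lemma Rlink_curve (x y : T) (p : forall i, {poly E i}) (q : I -> {poly F}) :
  (forall i, (q i).[0] != 0 /\ (q i).[1] != 0) ->
  (forall i, (p i).[0] != 0 /\ (p i).[1] != 0) ->
  \prod_i normP (p i) = \prod_i q i ^+ \dim (fullv : {vspace E i}) ->
  (forall i, x i = (p i).[0] / ((q i).[0])%:A) ->
  (forall i, y i = (p i).[1] / ((q i).[1])%:A) ->
  Rlink x y.
Proof.
move=> q_neq0 p_neq0 Np x_def y_def; split; last split; last by exists p, q.
  have -> : x = (fun i => (p i).[0%:A] / ((q i).[0])%:A).
    by apply: functional_extensionality_dep => i; rewrite x_def scale0r.
  apply: inT_horner => // i; first by case: (q_neq0 i).
  by rewrite scale0r; case: (p_neq0 i).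
have -> : y = (fun i => (p i).[1%:A] / ((q i).[1])%:A).
  by apply: functional_extensionality_dep => i; rewrite y_def scale1r.
apply: inT_horner => // i; first by case: (q_neq0 i).
by rewrite scale1r; case: (p_neq0 i).
Qed.

Lemma Rlink_mulr (z x y : T) : inT z -> Rlink x y -> Rlink (mulT x z) (mulT y z).
Proof.
move=> [z_neq0 Nz] [_ [_ [p [q [q_neq0 p_neq0 Np x_def y_def]]]]].
apply: (@Rlink_curve _ _ (fun i => p i * (z i)%:P) q) => // [i|||] /=.
- by rewrite !hornerM !hornerC; case: (p_neq0 i) => p0 p1; rewrite !mulf_neq0 ?z_neq0.
- under eq_bigr do rewrite normP_mul normP_C.
  by rewrite big_split /= -rmorph_prod Nz mulr1.
- by move=> i; rewrite /mulT x_def hornerM hornerC mulrAC.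
- by move=> i; rewrite /mulT y_def hornerM hornerC mulrAC.
Qed.

Lemma Requiv_mulr (z : T) : inT z -> {homo (fun x => mulT x z) : x y / Requiv x y}.
Proof. by move=> zT; apply: homo_Requiv => x y; apply: Rlink_mulr. Qed.

End Torus.

Arguments oneT {F I E}.

Lemma prod_sigT (R : comNzRingType) (I : finType) (K : I -> finType)
    (h : {i : I & K i} -> R) :
  \prod_j h j = \prod_i \prod_(k : K i) h (existT _ i k).
Proof.
rewrite (sig_big_dep xpredT (fun _ => xpredT) (fun i k => h (existT _ i k))) /=.
by apply: eq_bigr => -[i k].
Qed.

Section Copies.
Variables (F : fieldType) (m : nat) (L : 'I_m -> fieldExtType F).
Variables (r : 'I_m -> nat) (r_gt0 : forall i, (0 < r i)%N).
Local Notation J := {i : 'I_m & 'I_(r i)}.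
Local Notation T := (forall i, L i).
Local Notation T' := (forall j : J, L (tag j)).
Local Notation d i := (\dim (fullv : {vspace L i})).
Local Notation copy0 j := (val (tagged j) == 0%N).

Definition lift0 (x : T) : T' := fun j => if copy0 j then x (tag j) else 1.

Definition prod_copies (y : T') : T :=
  fun i => \prod_(k < r i) (y (existT _ i k) : L i).

Lemma prod_copy0 (R : comNzRingType) i (a : R) :
  \prod_(k < r i) (if val k == 0%N then a else 1) = a.
Proof.
rewrite (bigD1 (Ordinal (r_gt0 i))) //= big1 ?mulr1 // => k.
case: ifP => // k_eq0.
by case/negP; apply/eqP/val_inj; rewrite /= (eqP k_eq0).
Qed.

Lemma lift0K : cancel lift0 prod_copies.
Proof.
move=> x; apply: functional_extensionality_dep => i.
by rewrite /prod_copies /lift0 /=; apply: prod_copy0.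
Qed.

Lemma lift0M (x y : T) : lift0 (mulT x y) = mulT (lift0 x) (lift0 y).
Proof.
apply: functional_extensionality_dep => -[i k]; rewrite /lift0 /mulT /=.
by case: ifP; rewrite ?mulr1.
Qed.

Lemma prod_copiesK (y : T') :
  (forall j : J, ~~ copy0 j -> y j = 1) -> lift0 (prod_copies y) = y.
Proof.
move=> y_off0; apply: functional_extensionality_dep => -[i k].
rewrite /lift0 /prod_copies /=; case: ifPn => [k_eq0|k_neq0].
  rewrite (bigD1 k) //= big1 ?mulr1 // => k' k'_neq_k.
  by apply: (y_off0 (existT _ i k')); rewrite /= -(eqP k_eq0) val_eqE.
by rewrite (y_off0 (existT _ i k)).
Qed.

Lemma inT_lift0 (x : T) : inT x -> inT (lift0 x).
Proof.
move=> [x_neq0 Nx]; split=> [[i k]|].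
  by rewrite /lift0; case: ifP; rewrite ?oner_eq0 ?x_neq0.
rewrite prod_sigT -[RHS]Nx; apply: eq_bigr => i _; rewrite /lift0 /=.
by under eq_bigr do rewrite (fun_if (@normE _ (L i))) normE1; apply: prod_copy0.
Qed.

Lemma inT_prod_copies (y : T') : inT y -> inT (prod_copies y).
Proof.
move=> [y_neq0 Ny]; split=> [i|].
  by rewrite prodf_seq_neq0; apply/allP => k _; apply: y_neq0.
by rewrite -[RHS]Ny prod_sigT; apply: eq_bigr => i _; rewrite normE_prod.
Qed.

Lemma Rlink_lift0 : {homo lift0 : x y / Rlink x y}.
Proof.
move=> x y [_ [_ [p [q [q_neq0 p_neq0 Np x_def y_def]]]]].
apply: (@Rlink_curve _ _ _ _ _ (fun j => if copy0 j then p (tag j) else 1)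
                               (fun j => if copy0 j then q (tag j) else 1)).
- by move=> [i k] /=; case: ifP => _; rewrite ?hornerE ?oner_eq0.
- by move=> [i k] /=; case: ifP => _; rewrite ?hornerE ?oner_eq0.
- rewrite !prod_sigT; transitivity (\prod_i normP (p i)).
    apply: eq_bigr => i _ /=.
    by under eq_bigr do rewrite (fun_if (@normP _ (L i))) normP1; apply: prod_copy0.
  rewrite Np; apply: eq_bigr => i _ /=.
  by under eq_bigr do rewrite (fun_if (fun P => P ^+ _)) expr1n; rewrite prod_copy0.
- by move=> [i k]; rewrite /lift0 /=; case: ifP; rewrite ?hornerE ?scale1r ?invr1.
- by move=> [i k]; rewrite /lift0 /=; case: ifP; rewrite ?hornerE ?scale1r ?invr1.
Qed.

Lemma Rlink_prod_copies : {homo prod_copies : x y / Rlink x y}.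
Proof.
move=> x y [_ [_ [p [q [q_neq0 p_neq0 Np x_def y_def]]]]].
apply: (@Rlink_curve _ _ _ _ _ (fun i => \prod_(k < r i) (p (existT _ i k) : {poly L i}))
                               (fun i => \prod_(k < r i) q (existT _ i k))).
- move=> i; rewrite !horner_prod !prodf_seq_neq0.
  by split; apply/allP => k _; case: (q_neq0 (existT _ i k)).
- move=> i; rewrite !horner_prod !prodf_seq_neq0.
  by split; apply/allP => k _; case: (p_neq0 (existT _ i k)).
- transitivity (\prod_j normP (p j)).
    by rewrite prod_sigT; apply: eq_bigr => i _; rewrite normP_prod.
  rewrite Np prod_sigT; apply: eq_bigr => i _.
  by rewrite -prodrXl.
- move=> i; rewrite /prod_copies !horner_prod -in_algE rmorph_prod -prodf_div.
  by apply: eq_bigr => k _; rewrite [LHS]x_def.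
- move=> i; rewrite /prod_copies !horner_prod -in_algE rmorph_prod -prodf_div.
  by apply: eq_bigr => k _; rewrite [LHS]y_def.
Qed.

Section OffCopy0.
Variables (y : T') (yT : inT y).

Let c i (k : 'I_(r i)) : {poly L i} := line (y (existT _ i k)).
Let Nc i : {poly F} := \prod_(k < r i) normP (c k).
Let p (j : J) : {poly L (tag j)} :=
  (if copy0 j then \prod_(k < r (tag j)) c k ^+ (d (tag j)).-1 else 1) * c (tagged j).
Let q (j : J) : {poly F} := if copy0 j then Nc (tag j) else 1.

Lemma Rlink_one_off_copy0 :
  exists2 a : T', Rlink oneT a & forall j : J, ~~ copy0 j -> a j = y j.
Proof.
have [y_neq0 _] := yT.
have c0 i k : (@c i k).[0] = 1 by rewrite line0.
have c1 i k : (@c i k).[1] = y (existT _ i k) by rewrite line1.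
have prod_c0 i e : (\prod_(k < r i) c k ^+ e).[0] = 1.
  by rewrite horner_prod big1 // => k _; rewrite horner_exp c0 expr1n.
have prod_c1 i e : (\prod_(k < r i) c k ^+ e).[1] != 0.
  rewrite horner_prod prodf_seq_neq0; apply/allP => k _ /=.
  by rewrite horner_exp c1 expf_neq0 ?y_neq0.
have Nc0 i : (Nc i).[0] = 1.
  by rewrite horner_prod big1 // => k _; rewrite horner_normP scale0r c0 normE1.
have Nc1 i : (Nc i).[1] != 0.
  rewrite horner_prod prodf_seq_neq0; apply/allP => k _ /=.
  by rewrite horner_normP scale1r c1 normE_neq0 ?y_neq0.
exists (fun j => (p j).[1] / ((q j).[1])%:A); last first.
  move=> [i k] /= /negbTE k_neq0; rewrite /p /q /= k_neq0.
  by rewrite mul1r c1 hornerC scale1r invr1 mulr1.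
apply: Rlink_curve => // [[i k]|[i k]||[i k]] /=; rewrite /p /q /=.
- by case: ifP; rewrite ?Nc0 ?Nc1 ?hornerC ?oner_eq0.
- rewrite !hornerM c0 c1 mulr1.
  by case: ifP; rewrite ?prod_c0 ?hornerC ?oner_eq0 ?mul1r ?mulf_neq0 ?prod_c1 ?y_neq0.
- rewrite !prod_sigT; apply: eq_bigr => i _ /=.
  under eq_bigr do rewrite normP_mul (fun_if (@normP _ (L i))) normP1.
  under [RHS]eq_bigr do rewrite (fun_if (fun P => P ^+ _)) expr1n.
  rewrite big_split /= !prod_copy0 normP_prod.
  under eq_bigr do rewrite normP_exp.
  by rewrite prodrXl -exprSr prednK ?dimE_gt0.
- rewrite hornerM c0 mulr1 /oneT.
  by case: ifP => _; rewrite ?prod_c0 ?Nc0 ?hornerE ?scale1r ?invr1 ?mulr1.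
Qed.

End OffCopy0.

Lemma lift0_surj_Requiv (y : T') : inT y -> exists x, inT x /\ Requiv (lift0 x) y.
Proof.
move=> yT; have [a link1a a_off0] := Rlink_one_off_copy0 yT.
have aT : inT a by case: link1a => _ [].
pose w := mulT (invT a) y; have wT : inT w := inT_mul (inT_inv aT) yT.
exists (prod_copies w); split; first exact: inT_prod_copies.
rewrite prod_copiesK => [|j /a_off0 a_y]; last first.
  by rewrite /w /mulT /invT a_y mulVf ?(proj1 yT).
have := Requiv_mulr wT (@rst_step _ _ _ _ link1a).
by rewrite mul1T mulKT.
Qed.

End Copies.

Theorem mainTheorem13 (F : fieldType) (m : nat) (L : 'I_m -> fieldExtType F)
    (Lsep : forall i, separable (1%VS : {vspace L i}) fullv)
    (r : 'I_m -> nat) (rpos : forall i, (0 < r i)%N) :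
  RquotIso L (fun p : {i : 'I_m & 'I_(r i)} => L (tag p)).
Proof.
exists (lift0 (r := r)); split.
- exact: inT_lift0.
- move=> x y _ _; split; first exact: (homo_Requiv (Rlink_lift0 rpos)).
  by move/(homo_Requiv (Rlink_prod_copies (r := r))); rewrite !(lift0K rpos).
- by move=> x y _ _; rewrite lift0M; apply: rst_refl.
- exact: lift0_surj_Requiv.
Qed.
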